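(* Let $\mathbf a=(a_1,\dots,a_n)$ be a sequence of integers with $a_1+\cdots+a_n=1$, viewed as a lattice path $p$ with steps $(1,a_1),\dots,(1,a_n)$ from $(0,0)$ to $(n,1)$, with vertices $P_0,\dots,P_n$. Let $T\subseteq\{0,1,\dots,n-1\}$ be a set of $k\ge 1$ indices (the positions of the special vertices of $p$; the last vertex $P_n$ is not special). For $t\in T$, the conjugate $\sigma^t(p)$ has as special vertices its vertices in positions $m\in\{0,\dots,n-1\}$ with $(t+m)\bmod n\in T$ (so special vertices are carried along by cyclic shifting), and in particular $\sigma^t(p)$ starts with a special vertex. Let $X(\sigma^t(p))$ be the number of special vertices of $\sigma^t(p)$ lying on or below the $x$-axis, i.e. the number of $m\in\{0,\dots,n-1\}$ with $(t+m)\bmod n\in T$ and $a_{t+1}+a_{t+2}+\cdots+a_{t+m}\le 0$ (indices of $a$ taken modulo $n$). Then $$\{X(\sigma^{t}(p)) : t\in T\}=\{1,2,\dots,k\}.$$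
   Context: The conjugate $\sigma^t(p)$ is the path with step sequence $(a_{t+1},\dots,a_n,a_1,\dots,a_t)$ starting at the origin; its vertex in position $m$ corresponds to vertex $P_{t+m \bmod n}$ of $p$. *)

From mathcomp Require Import all_boot all_order all_algebra.
Unset Printing Implicit Defensive.
Import Order.TTheory GRing.Theory Num.Theory.
Local Open Scope ring_scope.

(* The step sequence (a_1,...,a_n) is encoded 0-indexed: a_{i+1} = a i for
   i < n; indices are always reduced modulo n, so values of a outside
   0..n-1 are irrelevant. *)

Definition special (n : nat) (T : {set 'I_n}) (x : nat) : bool :=
  [exists i : 'I_n, (i \in T) && (val i == (x %% n)%N)].

Definition conj_height (n : nat) (a : nat -> int) (t m : nat) : int :=
  \sum_(j < m) a ((t + j) %% n)%N.

Definition Xconj (n : nat) (a : nat -> int) (T : {set 'I_n}) (t : nat) : nat :=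
  #|[set m : 'I_n | special n T (t + m) && (conj_height n a t m <= 0)]|.

(* Extend the step sequence periodically and let [height i] be the height of
   vertex [i] of the resulting infinite path; since the steps of one period sum
   to 1, [height (n + i) = 1 + height i].  Vertex [m] of the conjugate at [t] is
   then on or below the axis exactly when [height (t + m) <= height t], i.e.
   when its residue [u = (t + m) mod n] satisfies [height u < height t], or
   [height u = height t] and [u] is not after [t] (the wrap-around adds 1).
   Ordering the indices by height with ties broken by decreasing index, X at
   [t] is thus the rank of [t] in [T] for a strict total order, and the ranks
   of the elements of a k-element set are exactly 1, ..., k. *)

From mathcomp Require Import all_boot all_order all_algebra.
From mathcomp Require Import zify.
Import Order.TTheory GRing.Theory Num.Theory.
Local Open Scope ring_scope.

Section Rank.

Variables (I : finType) (lt : rel I).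
Hypothesis lt_irr : irreflexive lt.
Hypothesis lt_trans : transitive lt.
Hypothesis lt_total : forall u v, u != v -> lt u v || lt v u.

Definition rank (T : {set I}) (t : I) : nat :=
  #|[set u in T | (u == t) || lt u t]|.

Lemma rank_gt0 (T : {set I}) t : t \in T -> (0 < rank T t)%N.
Proof. by move=> tT; apply/card_gt0P; exists t; rewrite !inE tT eqxx. Qed.

Lemma rank_le_card (T : {set I}) t : (rank T t <= #|T|)%N.
Proof. by apply: subset_leq_card; apply/subsetP => u; rewrite inE => /andP[]. Qed.

Lemma rank_lt (T : {set I}) (u v : I) :
  u \in T -> v \in T -> lt u v -> (rank T u < rank T v)%N.
Proof.
move=> uT vT luv; apply: proper_card; apply/properP; split.
  apply/subsetP => w; rewrite !inE => /andP[-> /orP[/eqP ->|lwu]].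
    by rewrite luv orbT.
  by rewrite (lt_trans _ _ _ lwu luv) orbT.
exists v; first by rewrite !inE vT eqxx.
rewrite !inE vT /=; apply/negP => /orP[/eqP evu|lvu].
  by move: luv; rewrite evu lt_irr.
by move: (lt_trans _ _ _ luv lvu); rewrite lt_irr.
Qed.

Arguments rank_lt {T u v}.

Lemma rank_inj (T : {set I}) : {in T &, injective (rank T)}.
Proof.
move=> u v uT vT e; apply/eqP; apply: contraT => /lt_total /orP[] l.
  by move: (rank_lt uT vT l); rewrite e ltnn.
by move: (rank_lt vT uT l); rewrite e ltnn.
Qed.

Lemma rank_onto (T : {set I}) x :
  (exists2 t, t \in T & rank T t = x) <-> (1 <= x <= #|T|)%N.
Proof.
split=> [[t tT <-]|xT]; first by rewrite rank_gt0 ?rank_le_card.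
have ranks_uniq : uniq (map (rank T) (enum T)).
  rewrite map_inj_in_uniq ?enum_uniq // => u v.
  by rewrite !mem_enum; apply: rank_inj.
have ranks_sub : {subset map (rank T) (enum T) <= iota 1 #|T|}.
  move=> y /mapP[t]; rewrite mem_enum => tT ->.
  by rewrite mem_iota add1n ltnS rank_gt0 ?rank_le_card.
have [|_ ranksE] := uniq_min_size ranks_uniq ranks_sub.
  by rewrite size_map size_iota -cardE.
have : x \in iota 1 #|T| by rewrite mem_iota add1n ltnS.
rewrite -ranksE => /mapP[t].
by rewrite mem_enum => tT ->; exists t.
Qed.

End Rank.

Arguments rank {I} lt T t.
Arguments rank_onto {I lt}.

Section CyclicHeights.

Variables (n : nat) (a : nat -> int).

Definition height (i : nat) : int := \sum_(j < i) a (j %% n)%N.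

Lemma conj_heightE t m : conj_height n a t m = height (t + m) - height t.
Proof.
elim: m => [|m IHm]; first by rewrite /conj_height big_ord0 addn0 subrr.
rewrite /conj_height big_ord_recr /= -/(conj_height n a t m) IHm.
by rewrite addnS /height big_ord_recr /= addrAC.
Qed.

Definition below (u t : 'I_n) : bool :=
  (height u < height t) || ((height u == height t) && (t < u)%N).

Lemma below_irr : irreflexive below.
Proof. by move=> u; rewrite /below ltxx ltnn andbF. Qed.

Lemma below_trans : transitive below.
Proof.
move=> v u w; rewrite /below.
move: (height u) (height v) (height w) (val u) (val v) (val w); lia.
Qed.

Lemma below_total u v : u != v -> below u v || below v u.
Proof.
rewrite -(inj_eq val_inj) /below.
by case: u v => [i ?] [j ?] /=; move: (height i) (height j); lia.
Qed.

Hypothesis sum_a : \sum_(i < n) a i = 1.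

Lemma heightDn i : height (n + i) = 1 + height i.
Proof.
elim: i => [|i IHi].
  rewrite addn0 /height big_ord0 addr0 -sum_a.
  by apply: eq_bigr => j _; rewrite modn_small.
by rewrite addnS /height !big_ord_recr /= -!/(height _) IHi modnDl addrA.
Qed.

Lemma conj_height_le0 (t m u : 'I_n) : u = ((t + m) %% n)%N :> nat ->
  (conj_height n a t m <= 0) = (u == t) || below u t.
Proof.
have tn := ltn_ord t; have mn := ltn_ord m.
rewrite conj_heightE -(inj_eq (@ord_inj n)) /below => ->.
case: (ltnP (t + m) n) => [tm_lt|tm_ge].
  rewrite modn_small //.
  case: (posnP m) => [->|m_gt0]; first by rewrite addn0 eqxx subrr lexx.
  move: (height (t + m)) (height t); lia.
have [j tmE] : exists j, (t + m = n + j)%N by exists (t + m - n)%N; rewrite subnKC.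
have j_lt : (j < t)%N by lia.
rewrite tmE modnDl modn_small ?(ltn_trans j_lt) // heightDn.
move: (height j) (height t); lia.
Qed.

Lemma Xconj_rank (T : {set 'I_n}) (t : 'I_n) : Xconj n a T t = rank below T t.
Proof.
have n_gt0 : (0 < n)%N by apply: leq_ltn_trans (ltn_ord t).
pose shift (m : 'I_n) : 'I_n := Ordinal (ltn_pmod (t + m) n_gt0).
have shift_inj : injective shift.
  move=> m m' /(congr1 val) /= /eqP.
  by rewrite eqn_modDl !modn_small // => /eqP /val_inj.
rewrite /Xconj /rank -[in RHS](card_preimset _ shift_inj); apply: eq_card => m.
rewrite !inE.
have -> : special n T (t + m) = (shift m \in T).
  apply/existsP/idP => [[u /andP[uT /eqP um]]|mT].
    by rewrite (_ : shift m = u) //; apply: val_inj.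
  by exists (shift m); rewrite mT eqxx.
by rewrite (conj_height_le0 t m (shift m) erefl).
Qed.

End CyclicHeights.

Theorem theorem4 (n : nat) (a : nat -> int) (T : {set 'I_n}) (k : nat) :
  \sum_(i < n) a i = 1 ->
  #|T| = k -> (1 <= k)%N ->
  forall x : nat,
    (exists2 t : 'I_n, t \in T & Xconj n a T t = x) <-> (1 <= x <= k)%N.
Proof.
move=> sum_a <- _ x.
rewrite -(rank_onto (below_irr n a) (below_trans n a) (below_total n a)).
by split=> -[t tT <-]; exists t; rewrite // Xconj_rank.
Qed.
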